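(* In every tranca mínima (as defined in the context), the losing team places at least one tile during the game.
   Context: Domino tiles: the set of tiles consists of the 28 unordered pairs $[a,b]=[b,a]$ with $a,b\in\{0,1,\dots,6\}$; the number of points (pips) of $[a,b]$ is $a+b$. Four players, numbered 1 to 4, play; players 1 and 3 form one team and players 2 and 4 the other. The 28 tiles are dealt, 7 to each player (the initial hands). Players take turns in cyclic order $1,2,3,4,1,\dots$. The starting player places any one of their tiles on the table, forming a line of tiles (the board) with two open ends. On each subsequent turn, the player whose turn it is must, if they hold a tile containing a number equal to the number shown at one of the two open ends, place such a tile at that end (with equal numbers adjacent), the other number of the tile becoming the new open end; if they hold no such tile, they pass. A game ends either when a player places their last tile, or in a tranca (blocked game): a position in which no player holds a tile that can be placed. In a game ending in a tranca, the team whose two players' remaining tiles have the smaller total number of pips wins, and the other team is the losing team. A tranca mínima is a game ending in a tranca in which the total number of pips on the tiles of the board at the end of the game is $42$. *)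

From mathcomp Require Import all_boot.
Set Implicit Arguments. Unset Strict Implicit. Unset Printing Implicit Defensive.

Notation num := 'I_7.

(* A tile [a,b] = [b,a] is stored in normal form (a,b) with a <= b.
   There are exactly 28 of them. *)
Definition tile := {p : num * num | p.1 <= p.2}.

Definition pips (t : tile) : nat := (val t).1 + (val t).2.

Definition has_num (t : tile) (x : num) : bool :=
  ((val t).1 == x) || ((val t).2 == x).

Definition oriented (o : num * num) (t : tile) : bool :=
  ((o.1 == (val t).1) && (o.2 == (val t).2)) ||
  ((o.1 == (val t).2) && (o.2 == (val t).1)).

(* Players 1,2,3,4 are 'I_4 indices 0,1,2,3.  Team of a player:
   players 1 and 3 (indices 0,2) are team [false], players 2 and 4 team [true]. *)
Definition team (p : 'I_4) : bool := odd p.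

(* The board is a line of oriented tiles; adjacent tiles have equal numbers
   touching; the open ends are (head).1 and (last).2. *)
Definition board := seq (num * num).

Definition board_pips (b : board) : nat := \sum_(o <- b) (o.1 + o.2).

Definition playable (h : {set tile}) (b : board) : bool :=
  match b with
  | [::] => h != set0
  | e :: _ => [exists t in h, has_num t e.1 || has_num t (last e b).2]
  end.

Definition step (p : 'I_4) (h : 'I_4 -> {set tile}) (b : board)
    (h' : 'I_4 -> {set tile}) (b' : board) : Prop :=
  (exists (t : tile) (o : num * num),
      t \in h p /\ oriented o t /\
      (forall q, h' q = if q == p then h p :\ t else h q) /\
      [\/ b = [::] /\ b' = [:: o],
          (exists e r, b = e :: r /\ o.2 = e.1 /\ b' = o :: b)
        | (exists e r, b = rcons r e /\ o.1 = e.2 /\ b' = rcons b o)])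
  \/ (~~ playable (h p) b /\ (forall q, h' q = h q) /\ b' = b).

Definition deal (h : 'I_4 -> {set tile}) : Prop :=
  (forall p, #|h p| = 7) /\
  (forall t : tile, exists p, t \in h p) /\
  (forall (t : tile) p q, t \in h p -> t \in h q -> p = q).

Definition all_nonempty (h : 'I_4 -> {set tile}) : Prop :=
  forall p, h p != set0.

Definition blocked (h : 'I_4 -> {set tile}) (b : board) : Prop :=
  b <> [::] /\ forall p, ~~ playable (h p) b.

Definition turn (start : 'I_4) (k : nat) : 'I_4 := inord ((start + k) %% 4).

Definition game_ending_in_tranca (start : 'I_4) (n : nat)
    (hs : nat -> 'I_4 -> {set tile}) (bs : nat -> board) : Prop :=
  [/\ deal (hs 0), bs 0 = [::],
      (forall k, k < n ->
         [/\ all_nonempty (hs k), ~ blocked (hs k) (bs k) &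
             step (turn start k) (hs k) (bs k) (hs k.+1) (bs k.+1)]),
      all_nonempty (hs n) & blocked (hs n) (bs n)].

Definition tranca_minima (start : 'I_4) (n : nat)
    (hs : nat -> 'I_4 -> {set tile}) (bs : nat -> board) : Prop :=
  game_ending_in_tranca start n hs bs /\ board_pips (bs n) = 42.

Definition team_pips (h : 'I_4 -> {set tile}) (T : bool) : nat :=
  \sum_(p : 'I_4 | team p == T) \sum_(t in h p) pips t.

Definition losing_team (h : 'I_4 -> {set tile}) (T : bool) : Prop :=
  team_pips h (~~ T) < team_pips h T.

Definition places_tile_at (bs : nat -> board) (k : nat) : Prop :=
  size (bs k.+1) = (size (bs k)).+1.

From mathcomp Require Import all_boot zify.
Set Implicit Arguments. Unset Strict Implicit. Unset Printing Implicit Defensive.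

(* In every tranca both teams place a tile; neither the pip count of the
   board nor which team loses matters.  Suppose a team never places.  The
   starting player always places, so this team moves at the odd turns, always
   passes, and keeps its initial hands.  Every number v lies on the final
   board, because the tile joining v to an open end is held by nobody in a
   blocked position.  Every number on the board was an open end at some
   moment; that moment is either the end of the game, when nobody holds v, or
   can be taken to be an odd turn, at which the passing player did not hold v.
   So each of the seven numbers is missing from the initial hand of one of the
   two partners.  But seven tiles cannot avoid four numbers, since only six
   tiles use at most three numbers. *)

Definition tiles_on (C : {set num}) : {set tile} :=
  [set t | ((val t).1 \in C) && ((val t).2 \in C)].

Lemma card_tiles_on (C : {set num}) : 2 * #|tiles_on C| = #|C| * #|C|.+1.
Proof.
(* Tiles are the pairs p with p.1 <= p.2; these and their swaps cover C x C
   and overlap exactly on the diagonal. *)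
pose U := [set val t | t in tiles_on C].
pose swap (p : num * num) := (p.2, p.1).
have swapK : involutive swap by case.
have cardU : #|U| = #|tiles_on C| by rewrite card_imset //; apply: val_inj.
have cardSU : #|swap @: U| = #|U| by rewrite card_imset //; apply: inv_inj.
have memU p : (p \in U) = [&& p.1 \in C, p.2 \in C & p.1 <= p.2].
  apply/imsetP/idP => [[t] | /and3P[p1C p2C le12]].
    by rewrite inE => /andP[t1C t2C] ->; rewrite t1C t2C (valP t).
  by exists (Sub p le12); rewrite ?inE ?SubK ?p1C.
have memSU p : (p \in swap @: U) = (swap p \in U).
  by rewrite -{1}[p]swapK mem_imset //; apply: inv_inj.
have cup : U :|: swap @: U = setX C C.
  apply/setP => -[x y]; rewrite !inE memSU !memU /=.
  by case: (x \in C); case: (y \in C) => //=; apply: leq_total.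
have cap : U :&: swap @: U = [set (x, x) | x in C].
  apply/setP => -[x y]; rewrite !inE memSU !memU /=.
  apply/idP/imsetP => [/andP[/and3P[xC _ le] /and3P[_ _ ge]] | [z zC [-> ->]]].
    by exists x => //; congr pair; apply/val_inj/anti_leq; rewrite le ge.
  by rewrite /= zC leqnn.
have := cardsUI U (swap @: U).
rewrite cup cap cardsX cardSU cardU card_imset => [|x y [] //].
by rewrite mulnS addnC mul2n -addnn => <-.
Qed.

Definition missing (h : {set tile}) : {set num} :=
  [set v | [forall t in h, ~~ has_num t v]].

Lemma missingP (h : {set tile}) v :
  reflect (forall t, t \in h -> ~~ has_num t v) (v \in missing h).
Proof. by rewrite inE; apply: (iffP forall_inP). Qed.

Lemma hand_sub_tiles_on (h : {set tile}) : h \subset tiles_on (~: missing h).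
Proof.
apply/subsetP => t th; rewrite inE !in_setC.
by apply/andP; split; apply/negP => /missingP /(_ t th); rewrite /has_num eqxx ?orbT.
Qed.

Lemma card_missing (h : {set tile}) : #|h| = 7 -> #|missing h| <= 3.
Proof.
move=> h7; have := card_tiles_on (~: missing h).
have := subset_leq_card (hand_sub_tiles_on h).
have := cardsC (missing h); rewrite card_ord h7.
move: #|missing h| #|~: missing h| #|tiles_on _| => a m c; nia.
Qed.

Lemma missing_partners (h1 h2 : {set tile}) :
  #|h1| = 7 -> #|h2| = 7 -> exists v, v \notin missing h1 :|: missing h2.
Proof.
move=> /card_missing le1 /card_missing le2.
have /subsetPn[v _ vN] : ~~ ([set: num] \subset missing h1 :|: missing h2).
  apply/negP => /subset_leq_card; rewrite cardsT card_ord.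
  by have := leq_card_setU (missing h1) (missing h2) => -[+ _]; lia.
by exists v.
Qed.

Definition ends (b : board) : seq num :=
  if b is e :: _ then [:: e.1; (last e b).2] else [::].

Definition on_board (v : num) (b : board) : bool :=
  has (fun o => (o.1 == v) || (o.2 == v)) b.

Definition placed (t : tile) (b : board) : bool := has (oriented^~ t) b.

Definition located (h : 'I_4 -> {set tile}) (b : board) (t : tile) : Prop :=
  (exists p, t \in h p) \/ placed t b.

Definition passes (p : 'I_4) (h : 'I_4 -> {set tile}) (b : board)
    (h' : 'I_4 -> {set tile}) (b' : board) : Prop :=
  [/\ ~~ playable (h p) b, forall q, h' q = h q & b' = b].

Lemma head_ends (o : num * num) b : o.1 \in ends (o :: b).
Proof. by rewrite inE eqxx. Qed.

Lemma last_ends (e : num * num) r : e.2 \in ends (rcons r e).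
Proof. by case: r => [|o r]; rewrite /= ?last_rcons !inE eqxx orbT. Qed.

Lemma ends_missing h b v : ~~ playable h b -> v \in ends b -> v \in missing h.
Proof.
case: b => [|e r] //= hP vE; apply/missingP => t th; apply: contra hP => tv.
by apply/existsP; exists t; move: vE; rewrite th !inE => /orP[]/eqP <-; rewrite tv ?orbT.
Qed.

Lemma placed_on_board t b v : placed t b -> has_num t v -> on_board v b.
Proof.
case/hasP => o ob ot tv; apply/hasP; exists o => //.
move: ot tv; rewrite /oriented /has_num.
by case/orP => /andP[/eqP-> /eqP->] /orP[]->; rewrite ?orbT.
Qed.

Lemma exists_tile (x y : num) : exists t : tile, has_num t x && has_num t y.
Proof.
rewrite /has_num; case: (leqP x y) => [xy | /ltnW yx].
  by exists (Sub (x, y) xy); rewrite !SubK /= !eqxx ?orbT.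
by exists (Sub (y, x) yx); rewrite !SubK /= !eqxx ?orbT.
Qed.

Lemma step_places_or_passes p h b h' b' : step p h b h' b' ->
  size b' = (size b).+1 \/ passes p h b h' b'.
Proof.
case=> [[t [o [_ [_ [_ hb]]]]] | [? [? ?]]]; last by right.
left; case: hb => [[-> ->] | [e [r [-> [_ ->]]]] | [e [r [-> [_ ->]]]]] //.
by rewrite size_rcons.
Qed.

Lemma step_hand_other p h b h' b' q : step p h b h' b' -> q != p -> h' q = h q.
Proof. by case=> [[t [o [_ [_ [-> _]]]]] | [_ [-> _]]] qp; rewrite ?(negbTE qp). Qed.

Lemma step_on_board p h b h' b' v : step p h b h' b' -> on_board v b' ->
  [\/ v \in ends b', v \in ends b | on_board v b].
Proof.
case=> [[t [o [_ [_ [_ hb]]]]] | [_ [_ ->]]]; last by move=> vb; constructor 3.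
case: hb => [[-> ->] | [e [r [eb [o2 ->]]]] | [e [r [eb [o1 ->]]]]].
- by rewrite /on_board /= orbF => /orP[]/eqP<-; constructor 1; rewrite !inE eqxx ?orbT.
- rewrite /on_board /= -orbA => /orP[/eqP<- | /orP[/eqP<- | vb]].
  + by constructor 1; apply: head_ends.
  + by constructor 2; rewrite eb o2 head_ends.
  + by constructor 3.
- rewrite /on_board has_rcons -orbA => /orP[/eqP<- | /orP[/eqP<- | vb]].
  + by constructor 2; rewrite eb o1 last_ends.
  + by constructor 1; apply: last_ends.
  + by constructor 3.
Qed.

Lemma step_located p h b h' b' t : step p h b h' b' ->
  located h b t -> located h' b' t.
Proof.
case=> [[s [o [_ [os [hh' hb]]]]] | [_ [hh' ->]] [[q tq] | tb]]; last 2 first.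
- by left; exists q; rewrite hh'.
- by right.
have grow P : P o || has P b -> has P b'.
  case: hb => [[-> ->] | [e [r [-> [_ ->]]]] | [e [r [-> [_ ->]]]]] /=.
  - by rewrite orbF.
  - by [].
  - by rewrite [has _ (rcons _ o)]has_rcons orbC.
case: (eqVneq t s) => [-> _ | ts [[q tq] | tb]]; first by right; apply: grow; rewrite os.
- left; exists q; rewrite hh'; case: eqP => [qp | //].
  by rewrite !inE ts -qp.
- by right; apply: grow; apply/orP; right.
Qed.

Lemma team_turn start k : team (turn start k) = odd start (+) odd k.
Proof. by rewrite /team /turn inordK ?ltn_pmod // odd_mod // oddD. Qed.

Lemma turn_modn start k : turn start (k %% 4) = turn start k.
Proof. by rewrite /turn modnDmr. Qed.

Section Game.

Variables (start : 'I_4) (n : nat).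
Variables (hs : nat -> 'I_4 -> {set tile}) (bs : nat -> board).
Hypothesis game : game_ending_in_tranca start n hs bs.

Lemma game_step k : k < n -> step (turn start k) (hs k) (bs k) (hs k.+1) (bs k.+1).
Proof. by case: game => _ _ steps _ _ /steps[]. Qed.

Lemma game_length_gt0 : 0 < n.
Proof.
case: game => _ b0 _ _ [bn _]; rewrite lt0n; apply/eqP => n0.
by apply: bn; rewrite n0.
Qed.

Lemma game_located k t : k <= n -> located (hs k) (bs k) t.
Proof.
elim: k => [_ | k IHk kn]; first by case: game => [[_ [+ _]]] _ _ _ _; left.
by apply: step_located (game_step kn) (IHk (ltnW kn)).
Qed.

Lemma game_final_ends_missing v p : v \in ends (bs n) -> v \in missing (hs n p).
Proof. by case: game => _ _ _ _ [_ /(_ p)]; apply: ends_missing. Qed.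

Lemma game_final_on_board v : on_board v (bs n).
Proof.
case Ebn: (bs n) => [|e r]; first by case: game => _ _ _ _ [].
have [t /andP[te tv]] := exists_tile e.1 v.
case: (game_located t (leqnn n)) => [[p tp] | tb].
  2: by rewrite -Ebn (placed_on_board tb).
have /missingP/(_ t tp) : e.1 \in missing (hs n p).
  by apply: game_final_ends_missing; rewrite Ebn head_ends.
by rewrite te.
Qed.

Lemma game_on_board_end k v : k <= n -> on_board v (bs k) ->
  exists2 m, m <= k & v \in ends (bs m).
Proof.
elim: k => [_ | k IHk kn]; first by case: game => _ ->.
case/(step_on_board (game_step kn)) => [vE | vE | /(IHk (ltnW kn))[m mk vE]].
- by exists k.+1.
- by exists k.
- by exists m => //; apply: leqW.
Qed.

Section SilentTeam.

Variable T : bool.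
Hypothesis silent :
  forall k, k < n -> team (turn start k) = T -> ~ places_tile_at bs k.

Lemma silent_passes k : k < n -> team (turn start k) = T ->
  passes (turn start k) (hs k) (bs k) (hs k.+1) (bs k.+1).
Proof.
by move=> kn kT; case: (step_places_or_passes (game_step kn)) => // /(silent kn kT).
Qed.

Lemma silent_hand k p : k <= n -> team p = T -> hs k p = hs 0 p.
Proof.
move=> + pT; elim: k => [// | k IHk kn]; rewrite -IHk ?(ltnW kn) //.
have [kT | kT] := eqVneq (team (turn start k)) T.
  by case: (silent_passes kn kT) => _ ->.
by apply: (step_hand_other (game_step kn)); apply: contraNneq kT => <-; rewrite pT.
Qed.

Lemma silent_turn k : (team (turn start k) == T) = odd k.
Proof.
suff : odd start != T by rewrite team_turn; case: (odd start); case: T; case: (odd k).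
apply/eqP => startT.
have T0 : team (turn start 0) = T by rewrite team_turn addbF.
case: (silent_passes game_length_gt0 T0); case: game => [[h7 _]] -> _ _ _.
by rewrite /= negbK => /eqP h0; move: (h7 (turn start 0)); rewrite h0 cards0.
Qed.

Lemma silent_end_missing m v : m <= n -> v \in ends (bs m) ->
  exists2 j, odd j & v \in missing (hs 0 (turn start j)).
Proof.
have oddT j : odd j -> team (turn start j) = T.
  by move=> oj; apply/eqP; rewrite silent_turn.
have passed j : j < n -> odd j -> v \in ends (bs j) ->
    v \in missing (hs 0 (turn start j)).
  move=> jn oj; case: (silent_passes jn (oddT j oj)) => np _ _.
  by rewrite -(silent_hand (ltnW jn) (oddT j oj)); apply: ends_missing.
rewrite leq_eqVlt => /orP[/eqP -> | mn] vE.
  exists 1 => //; rewrite -(silent_hand (leqnn n) (oddT 1 isT)).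
  exact: game_final_ends_missing.
case: m mn vE => [|m] mn; first by case: game => _ ->.
have [om1 | em] := boolP (odd m.+1); first by exists m.+1; last exact: passed.
have om : odd m by move: em; rewrite /= negbK.
case: (silent_passes (ltnW mn) (oddT m om)) => _ _ bsm.
by exists m => //; apply: passed (ltnW mn) om _; rewrite -bsm.
Qed.

Lemma silent_team_absurd : False.
Proof.
case: game => [[h7 _]] _ _ _ _.
have [v] := missing_partners (h7 (turn start 1)) (h7 (turn start 3)); apply/negP.
have [m mn /(silent_end_missing mn)[j oj]] :=
  game_on_board_end (leqnn n) (game_final_on_board v).
rewrite -turn_modn; have : j %% 4 < 4 by apply: ltn_pmod.
have : odd (j %% 4) by rewrite odd_mod.
by case: (j %% 4) => [|[|[|[|i]]]] //= _ _ vM; rewrite inE vM ?orbT.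
Qed.

End SilentTeam.

Lemma tranca_team_places T :
  exists k, k < n /\ team (turn start k) = T /\ places_tile_at bs k.
Proof.
have [/existsP[k /andP[/eqP kT /eqP kP]] | none] :=
  boolP [exists k : 'I_n,
           (team (turn start k) == T) && (size (bs k.+1) == (size (bs k)).+1)].
  by exists k.
case: (silent_team_absurd (T := T)) => k kn kT kP; move/existsP: none; apply.
by exists (Ordinal kn); rewrite /= kT kP !eqxx.
Qed.

End Game.

Theorem mainTheorem7 (start : 'I_4) (n : nat)
    (hs : nat -> 'I_4 -> {set tile}) (bs : nat -> board) (T : bool) :
  tranca_minima start n hs bs ->
  losing_team (hs n) T ->
  exists k, k < n /\ team (turn start k) = T /\ places_tile_at bs k.
Proof. by move=> [game _] _; exact: tranca_team_places game T. Qed.
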